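(* Let $x_1,\dots,x_n\in\mathbb{R}^d$ and $y_1,\dots,y_n\in\{0,1\}$, let $R>0$ satisfy $\|x_i\|_2\le R$ for all $i$, let $\ell(\beta)=\sum_{i=1}^n\{y_ix_i^T\beta-\log(1+e^{x_i^T\beta})\}$ and let $\hat\beta$ be a maximizer of $\ell$. Let $L\ge1$ be an integer, $z_1,\dots,z_L\in\mathbb{R}$, $F_L(a)=L^{-1}\sum_{l=1}^L1\{a\ge z_l\}$, and $\nabla\tilde\ell(\beta)=\sum_{i=1}^n\{x_iy_i-x_iF_L(x_i^T\beta)\}$. Suppose $\beta\in\mathbb{R}^d$ satisfies $\|\nabla\tilde\ell(\beta)\|_2\le nRL^{-1}$. Let $\hat\lambda_{\min}$ be the smallest eigenvalue of the Fisher information matrix $I(\cdot)=-n^{-1}\nabla^2\ell(\cdot)$ over the line segment between $\beta$ and $\hat\beta$, i.e. $\hat\lambda_{\min}=\inf_{a\in[0,1]}\lambda_{\min}\bigl(I(a\beta+(1-a)\hat\beta)\bigr)$, and suppose $\hat\lambda_{\min}>0$. Then $$\|\beta-\hat\beta\|_2\le\frac{R\bigl(L^{-1}+\sup_{a\in\mathbb{R}}|F_L(a)-\sigma(a)|\bigr)}{\hat\lambda_{\min}},$$ where $\sigma(a)=(1+e^{-a})^{-1}$.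
   Context: $\nabla^2\ell(\beta)=-\sum_i\sigma(x_i^T\beta)(1-\sigma(x_i^T\beta))x_ix_i^T$ is the Hessian of the logistic log-likelihood $\ell$. $\nabla\tilde\ell$ is the approximate gradient in which the logistic function $\sigma$ is replaced by the empirical CDF $F_L$ of the points $z_1,\dots,z_L$ (in the paper, independent logistic draws). For a symmetric matrix $B$, $\lambda_{\min}(B)$ is its smallest eigenvalue. *)

From HB Require Import structures.
From mathcomp Require Import all_boot all_order all_algebra.
From mathcomp Require Import all_classical all_reals all_analysis.
Set Implicit Arguments. Unset Strict Implicit. Unset Printing Implicit Defensive.
Import Order.TTheory GRing.Theory Num.Theory.
Local Open Scope classical_set_scope.
Local Open Scope ring_scope.

Section Defs.
Variable R : realType.

Definition dotv (d : nat) (u v : 'cV[R]_d) : R := (u^T *m v) 0 0.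

Definition norm2 (d : nat) (v : 'cV[R]_d) : R := Num.sqrt (dotv v v).

Definition sigma (a : R) : R := (1 + expR (- a))^-1.

Definition loglik (n d : nat) (x : 'I_n -> 'cV[R]_d) (y : 'I_n -> bool)
  (beta : 'cV[R]_d) : R :=
  \sum_(i < n) ((y i)%:R * dotv (x i) beta - ln (1 + expR (dotv (x i) beta))).

Definition hessian (n d : nat) (x : 'I_n -> 'cV[R]_d) (beta : 'cV[R]_d)
  : 'M[R]_d :=
  - \sum_(i < n) ((sigma (dotv (x i) beta) * (1 - sigma (dotv (x i) beta)))
                   *: (x i *m (x i)^T)).

Definition fisher (n d : nat) (x : 'I_n -> 'cV[R]_d) (beta : 'cV[R]_d)
  : 'M[R]_d := - ((n%:R)^-1 *: hessian x beta).

Definition lambda_min (d : nat) (B : 'M[R]_d) : R :=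
  inf [set a : R | eigenvalue B a].

Definition FL (L : nat) (z : 'I_L -> R) (a : R) : R :=
  (L%:R)^-1 * \sum_(l < L) (if z l <= a then 1 else 0).

Definition grad_approx (n d L : nat) (x : 'I_n -> 'cV[R]_d)
  (y : 'I_n -> bool) (z : 'I_L -> R) (beta : 'cV[R]_d) : 'cV[R]_d :=
  \sum_(i < n) ((y i)%:R *: x i - FL z (dotv (x i) beta) *: x i).

End Defs.

(* Put v = beta - betahat and g(t) = <v, grad l(betahat + t v)>.  Since betahat maximizes l,
   g(0) = 0, so the mean value theorem gives g(1) = g'(xi) = v^T H(p) v = -n v^T I(p) v for a
   point p = betahat + xi v of the segment.  The Rayleigh bound v^T I(p) v >= lambda_min |v|^2,
   obtained by minimizing the quadratic form over the compact unit sphere, then yields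
   n lambda_min |v|^2 <= -g(1).  Writing
   grad l(beta) = grad~l(beta) + sum_i (F_L - sigma)(x_i^T beta) x_i
   and using Cauchy-Schwarz bounds -g(1) by |v| (n R / L + n R sup |F_L - sigma|). *)

From HB Require Import structures.
From mathcomp Require Import all_boot all_order all_algebra.
From mathcomp Require Import all_classical all_reals all_analysis.
From mathcomp Require Import ring lra.
Import Order.TTheory GRing.Theory Num.Theory.
Import numFieldNormedType.Exports.
Local Open Scope classical_set_scope.
Local Open Scope ring_scope.
Set Implicit Arguments. Unset Strict Implicit. Unset Printing Implicit Defensive.

Section DotProduct.
Variables (R : realType) (d : nat).
Implicit Types (u v w : 'cV[R]_d).

Lemma dotvE u v : dotv u v = \sum_j u j 0 * v j 0.
Proof. by rewrite /dotv mxE; apply: eq_bigr => j _; rewrite mxE. Qed.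

Lemma dotvC u v : dotv u v = dotv v u.
Proof. by rewrite !dotvE; apply: eq_bigr => j _; rewrite mulrC. Qed.

Lemma dotvDr u v w : dotv u (v + w) = dotv u v + dotv u w.
Proof. by rewrite /dotv mulmxDr mxE. Qed.

Lemma dotvZr u v t : dotv u (t *: v) = t * dotv u v.
Proof. by rewrite /dotv -scalemxAr mxE. Qed.

Lemma dotvBr u v w : dotv u (v - w) = dotv u v - dotv u w.
Proof. by rewrite -scaleN1r dotvDr dotvZr mulN1r. Qed.

Lemma dotvDl u v w : dotv (u + v) w = dotv u w + dotv v w.
Proof. by rewrite dotvC dotvDr !(dotvC w). Qed.

Lemma dotvZl u v t : dotv (t *: u) v = t * dotv u v.
Proof. by rewrite dotvC dotvZr dotvC. Qed.

Lemma dotvBl u v w : dotv (u - v) w = dotv u w - dotv v w.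
Proof. by rewrite dotvC dotvBr !(dotvC w). Qed.

Lemma dotv0r u : dotv u 0 = 0.
Proof. by rewrite /dotv mulmx0 mxE. Qed.

Lemma dotv_sumr n u (f : 'I_n -> 'cV[R]_d) :
  dotv u (\sum_i f i) = \sum_i dotv u (f i).
Proof. by elim/big_ind2: _ => [|v1 r1 v2 r2 <- <-|//]; rewrite ?dotv0r ?dotvDr. Qed.

Lemma dotvvE u : dotv u u = \sum_j u j 0 ^+ 2.
Proof. by rewrite dotvE; apply: eq_bigr => j _; rewrite expr2. Qed.

Lemma dotvv_ge0 u : 0 <= dotv u u.
Proof. by rewrite dotvvE sumr_ge0 // => j _; rewrite sqr_ge0. Qed.

Lemma dotvv_eq0 u : (dotv u u == 0) = (u == 0).
Proof.
apply/idP/eqP => [|->]; last by rewrite dotv0r.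
rewrite dotvvE psumr_eq0 => [/allP u0|j _]; last by rewrite sqr_ge0.
apply/matrixP => i j; rewrite (ord1 j) mxE.
by move: (u0 i (mem_index_enum i)); rewrite /= sqrf_eq0 => /eqP.
Qed.

Lemma dotv_mul_outer u v w : dotv u (v *m v^T *m w) = dotv u v * dotv v w.
Proof. by rewrite /dotv !mulmxA -(mulmxA (u^T *m v)) [LHS]mxE big_ord1. Qed.

Lemma norm2_ge0 u : 0 <= norm2 u.
Proof. exact: sqrtr_ge0. Qed.

Lemma sqr_norm2 u : norm2 u ^+ 2 = dotv u u.
Proof. by rewrite sqr_sqrtr // dotvv_ge0. Qed.

Lemma cauchy_schwarz u v : `|dotv u v| <= norm2 u * norm2 v.
Proof.
suff uv : dotv u v ^+ 2 <= dotv u u * dotv v v.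
  by rewrite -sqrtr_sqr -sqrtrM ?dotvv_ge0 // ler_wsqrtr.
have [->|v0] := eqVneq v 0; first by rewrite !dotv0r expr0n /= mulr0.
have vv : 0 < dotv v v by rewrite lt_def dotvv_eq0 v0 dotvv_ge0.
(* expand |u - t v|^2 >= 0 at the minimizing t = <u,v> / <v,v> *)
set t := dotv u v / dotv v v.
have e : dotv (u - t *: v) (u - t *: v) = dotv u u - dotv u v ^+ 2 / dotv v v.
  rewrite !(dotvBl, dotvBr, dotvZl, dotvZr) (dotvC v u) /t.
  by field; rewrite gt_eqF.
by have := dotvv_ge0 (u - t *: v); rewrite e subr_ge0 ler_pdivrMr.
Qed.

End DotProduct.

Lemma quadratic_ge0_linear_eq0 (R : realFieldType) (b c : R) :
  (forall t, 0 <= 2 * t * b + t ^+ 2 * c) -> b = 0.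
Proof.
move=> q_ge0; have [c_le0|c_gt0] := lerP c 0.
  by have := q_ge0 1; have := q_ge0 (-1); nra.
have := q_ge0 (- b / c).
have -> : 2 * (- b / c) * b + (- b / c) ^+ 2 * c = - (b ^+ 2 / c).
  by field; rewrite gt_eqF.
rewrite oppr_ge0 pmulr_lle0 ?invr_gt0 // => b2.
by apply/eqP; rewrite -sqrf_eq0 eq_le b2 sqr_ge0.
Qed.

Lemma continuous_sum (T : topologicalType) (R : realType) n (f : 'I_n -> T -> R) :
  (forall i, continuous (f i)) -> continuous (fun t => \sum_i f i t).
Proof.
move=> fc; have -> : (fun t => \sum_i f i t) = \sum_i f i.
  by apply/funext => t; rewrite fct_sumE.
apply: (big_ind (fun g : T -> R => continuous g)) => //; first exact: cst_continuous.
by move=> g h gc hc t; exact: (continuousD (gc t) (hc t)).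
Qed.

Lemma inf_le_of_gt0 (R : realType) (E : set R) a : 0 < inf E -> E a -> inf E <= a.
Proof.
(* without a lower bound, inf E would be the junk value 0 *)
move=> infE_gt0 Ea; apply: ge_inf => //; apply: contrapT => E_nlb.
by move: infE_gt0; rewrite inf_out ?ltxx // => -[].
Qed.

Section QuadraticForm.
Variables (R : realType) (d : nat).
Implicit Types (M : 'M[R]_d) (u v : 'cV[R]_d).

Lemma dotv_mulmxr M u v : dotv u (M *m v) = dotv (M^T *m u) v.
Proof. by rewrite /dotv trmx_mul trmxK mulmxA. Qed.

Lemma sym_psd_quad_eq0 M u : M^T = M -> (forall v, 0 <= dotv v (M *m v)) ->
  dotv u (M *m u) = 0 -> M *m u = 0.
Proof.
move=> symM psdM qu0; set w := M *m u; apply/eqP; rewrite -dotvv_eq0.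
apply/eqP/(@quadratic_ge0_linear_eq0 _ _ (dotv w (M *m w))) => t.
have wMu : dotv u (M *m w) = dotv w w by rewrite dotv_mulmxr symM.
have := psdM (u + t *: w).
rewrite mulmxDr -scalemxAr !(dotvDl, dotvDr, dotvZl, dotvZr) qu0 wMu.
by rewrite dotvC -/w; congr (0 <= _); ring.
Qed.

Lemma continuous_quad_rV M : continuous (fun r : 'rV[R]_d => dotv r^T (M *m r^T)).
Proof.
have -> : (fun r : 'rV[R]_d => dotv r^T (M *m r^T)) =
    (fun r => \sum_j r 0 j * \sum_k M j k * r 0 k).
  apply/funext => r; rewrite dotvE; apply: eq_bigr => j _; rewrite !mxE.
  by congr (_ * _); apply: eq_bigr => k _; rewrite mxE.
apply: continuous_sum => j r; apply: continuousM; first exact: coord_continuous.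
apply: (continuous_sum (f := fun k (r : 'rV[R]_d) => M j k * r 0 k)) => {}k {}r.
by apply: continuousM; [exact: cst_continuous | exact: coord_continuous].
Qed.

Lemma compact_unit_sphere_rV : compact [set r : 'rV[R]_d | dotv r^T r^T = 1].
Proof.
apply: bounded_closed_compact.
  exists 1; split => // e e_gt1 r /= r1; rewrite /Num.norm /= mx_normrE.
  apply: bigmax_le => [|[i j] _ /=]; first by rewrite ltW // (lt_trans ltr01).
  apply: le_trans (ltW e_gt1); rewrite (ord1 i) -(expr_le1 (n := 2)) //.
  rewrite real_normK ?num_real // -r1 dotvvE (bigD1 j) //= mxE lerDl.
  by rewrite sumr_ge0 // => k _; rewrite sqr_ge0.
rewrite (_ : [set r | _] = (fun r : 'rV[R]_d => dotv r^T r^T) @^-1` [set x | x = 1]) //.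
apply: preimage_closed; last exact: closed_eq.
by move=> r _; have := @continuous_quad_rV 1%:M r; under eq_fun do rewrite mul1mx.
Qed.

Lemma sym_min_quad_eigenvalue M : (0 < d)%N -> M^T = M ->
  exists m, eigenvalue M m /\ forall v, m * dotv v v <= dotv v (M *m v).
Proof.
move=> d_gt0 symM; set S := [set r : 'rV[R]_d | dotv r^T r^T = 1].
have S0 : S !=set0.
  exists (delta_mx 0 (Ordinal d_gt0)); rewrite /S /= dotvvE (bigD1 (Ordinal d_gt0)) //=.
  rewrite big1 => [|j /negbTE jk]; rewrite !mxE ?jk ?andbF ?expr0n //.
  by rewrite !eqxx expr1n addr0.
have [c /[!inE] /= c1 cmin] := EVT_min_rV S0 compact_unit_sphere_rV
  (continuous_subspaceT (@continuous_quad_rV M)).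
set m := dotv c^T (M *m c^T) in cmin.
(* the minimum of the quadratic form on the unit sphere bounds it on all rays *)
have quad_ge v : m * dotv v v <= dotv v (M *m v).
  have [->|v0] := eqVneq v 0; first by rewrite !(dotv0r, mulmx0) mulr0.
  have vv : 0 < dotv v v by rewrite lt_def dotvv_eq0 v0 dotvv_ge0.
  set s := norm2 v; have s_gt0 : 0 < s by rewrite sqrtr_gt0.
  have scale a : s^-1 * (s^-1 * a) = a / dotv v v.
    by rewrite -sqr_norm2 -/s; field; rewrite gt_eqF.
  have := cmin (s^-1 *: v)^T; rewrite inE /S /= trmxK -scalemxAr.
  rewrite !(dotvZl, dotvZr) !scale divff ?gt_eqF //.
  by move=> /(_ erefl); rewrite ler_pdivlMr.
exists m; split => //; apply/eigenvalueP; exists c; last first.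
  by apply: contra_eqN c1 => /eqP ->; rewrite trmx0 dotv0r eq_sym oner_eq0.
have symMm : (M - m%:M)^T = M - m%:M by rewrite linearB /= tr_scalar_mx symM.
have quadMm v : dotv v ((M - m%:M) *m v) = dotv v (M *m v) - m * dotv v v.
  by rewrite mulmxBl mul_scalar_mx dotvBr dotvZr.
have psdMm v : 0 <= dotv v ((M - m%:M) *m v) by rewrite quadMm subr_ge0.
have := sym_psd_quad_eq0 (u := c^T) symMm psdMm; rewrite quadMm c1 mulr1 subrr.
move=> /(_ erefl) /eqP.
rewrite mulmxBl mul_scalar_mx subr_eq0 => /eqP /(congr1 trmx).
by rewrite trmx_mul trmxK symM linearZ /= trmxK.
Qed.

Lemma lambda_min_quad_le M v : M^T = M ->
  lambda_min M * dotv v v <= dotv v (M *m v).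
Proof.
move=> symM; have [d0|d_gt0] := posnP d.
  (* for d = 0 both quadratic forms vanish, whatever the empty infimum lambda_min M is *)
  have no_index (j : 'I_d) : False by move: (ltn_ord j); rewrite [X in (_ < X)%N]d0.
  by rewrite !dotvE !big1 ?mulr0 // => j; case: (no_index j).
have [m [Mm quad_ge]] := sym_min_quad_eigenvalue d_gt0 symM.
have m_le a : eigenvalue M a -> m <= a.
  move=> /eigenvalueP[w wM w0]; set c := w^T.
  have cM : M *m c = a *: c by rewrite -symM -trmx_mul wM linearZ.
  have cc : 0 < dotv c c by rewrite lt_def dotvv_eq0 trmx_eq0 w0 dotvv_ge0.
  by have := quad_ge c; rewrite cM dotvZr ler_pM2r.
apply: le_trans (quad_ge v); rewrite ler_wpM2r ?dotvv_ge0 //.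
by apply: ge_inf => //; exists m => a /m_le.
Qed.

End QuadraticForm.

Section Logistic.
Variable R : realType.

Lemma sigma_gt0 (a : R) : 0 < sigma a.
Proof. by rewrite /sigma invr_gt0 addr_gt0 // expR_gt0. Qed.

Lemma sigma_lt1 (a : R) : sigma a < 1.
Proof. by rewrite /sigma invf_lt1 ?addr_gt0 ?expR_gt0 // ltrDl expR_gt0. Qed.

Lemma is_derive_sigma (a : R) : is_derive a 1 (@sigma R) (sigma a * (1 - sigma a)).
Proof.
have de : is_derive a 1 (fun s : R => 1 + expR (- s)) (expR (- a) * -1).
  have := is_deriveD (is_derive_cst (1 : R) a 1)
    (is_derive1_comp (is_derive_expR (- a)) (is_deriveNid a 1)).
  by move=> /is_derive_eq; apply; rewrite add0r.
have e_gt0 : 0 < 1 + expR (- a) by rewrite addr_gt0 // expR_gt0.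
rewrite (_ : @sigma R = fun s => (1 + expR (- s))^-1) //.
apply: is_derive_eq (is_deriveV (f := fun s : R => 1 + expR (- s)) _ de) _.
  exact: lt0r_neq0.
by rewrite /sigma /GRing.scale /=; field; rewrite gt_eqF.
Qed.

Lemma is_derive_softplus (a : R) :
  is_derive a 1 (fun s : R => ln (1 + expR s)) (sigma a).
Proof.
have e_gt0 : 0 < 1 + expR a by rewrite addr_gt0 // expR_gt0.
have := is_derive1_comp (f := @ln R) (g := cst 1 + expR) (is_derive1_ln e_gt0)
  (is_deriveD (is_derive_cst (1 : R) a 1) (is_derive_expR a)).
move=> /is_derive_eq; apply; rewrite /sigma /= add0r expRN.
by field; rewrite ?gt_eqF ?expR_gt0.
Qed.

Lemma is_derive_line (g dg : R -> R) (c u t : R) :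
  (forall s : R, is_derive s 1 g (dg s)) ->
  is_derive t 1 (fun s => g (c + s * u)) (dg (c + t * u) * u).
Proof.
move=> gd; have line : is_derive t 1 (fun s => c + s * u) u.
  rewrite (_ : (fun s => _) = cst c + u \*: id); last first.
    by apply/funext => s /=; rewrite mulrC.
  have := is_deriveD (is_derive_cst c t 1) (is_deriveZ u (is_derive_id t 1)).
  by move=> /is_derive_eq; apply; rewrite add0r scaler1.
exact: (is_derive1_comp (gd _) line).
Qed.

Lemma is_derive_sumr n (h : 'I_n -> R -> R) (dh : 'I_n -> R) (t : R) :
  (forall i, is_derive t 1 (h i) (dh i)) ->
  is_derive t 1 (fun s => \sum_i h i s) (\sum_i dh i).
Proof.
move=> hd; rewrite (_ : (fun s => _) = \sum_i h i); first exact: is_derive_sum.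
by apply/funext => s; rewrite fct_sumE.
Qed.

Lemma is_derive_loglik_term (c a : R) :
  is_derive a 1 (fun s => c * s - ln (1 + expR s)) (c - sigma a).
Proof.
have := is_deriveB (is_deriveZ c (is_derive_id a 1)) (is_derive_softplus a).
by move=> /is_derive_eq; apply; rewrite /GRing.scale /= mulr1.
Qed.

Lemma is_derive_score_term (c k a : R) :
  is_derive a 1 (fun s => (c - sigma s) * k) (- (sigma a * (1 - sigma a)) * k).
Proof.
have := is_deriveM (is_deriveB (is_derive_cst c a 1) (is_derive_sigma a))
  (is_derive_cst k a 1).
by move=> /is_derive_eq; apply; rewrite /GRing.scale /=; ring.
Qed.

Lemma FL_ge0 L (z : 'I_L -> R) a : 0 <= FL z a.
Proof. by rewrite mulr_ge0 ?invr_ge0 // sumr_ge0 // => l _; case: ifP. Qed.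

Lemma FL_le1 L (z : 'I_L -> R) a : FL z a <= 1.
Proof.
rewrite /FL; have [L0|L_gt0] := posnP L.
  by rewrite (_ : (L%:R : R)^-1 = 0) ?mul0r ?ler01 // L0 invr0.
rewrite ler_pdivrMl ?ltr0n // mulr1; apply: (le_trans (y := \sum_(l < L) (1 : R))).
  by apply: ler_sum => l _; case: ifP.
by rewrite sumr_const card_ord.
Qed.

Lemma dist_FL_sigma_le_sup L (z : 'I_L -> R) a :
  `|FL z a - sigma a| <= sup [set `|FL z b - sigma b| | b in [set: R]].
Proof.
apply: ub_le_sup; last by exists a.
exists 1 => _ [b _ <-]; have := FL_ge0 z b; have := FL_le1 z b.
by have := sigma_gt0 b; have := sigma_lt1 b; rewrite ler_norml; lra.
Qed.

Lemma mvt_deriv_from_max (f df ddf : R -> R) :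
    (forall t : R, is_derive t 1 f (df t)) ->
    (forall t : R, is_derive t 1 df (ddf t)) -> (forall t, f t <= f 0) ->
  exists2 xi, 0 < xi < 1 & df 1 = ddf xi.
Proof.
move=> fd dfd fmax.
have df0 : df 0 = 0.
  have f'0 : is_derive (0 : R) 1 f 0.
    apply: (@derive1_at_max _ f (-1) 1) => [|t _||t _]; first lra.
    - exact: @ex_derive _ _ _ _ _ _ _ (fd t).
    - by rewrite in_itv /= ltrN10 ltr01.
    - exact: fmax.
  by rewrite -(@derive_val _ _ _ _ _ _ _ (fd 0)) (@derive_val _ _ _ _ _ _ _ f'0).
have dfc : {within `[0, 1], continuous df}.
  apply/continuous_subspaceT => t.
  exact/differentiable_continuous/derivable1_diffP/(@ex_derive _ _ _ _ _ _ _ (dfd t)).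
have [xi /[!in_itv] /= xi01] := MVT ltr01 (fun t _ => dfd t) dfc.
by rewrite df0 !subr0 mulr1 => ?; exists xi.
Qed.

End Logistic.

Lemma dotv_sum_scale_le (R : realType) d n (c : 'I_n -> R) (w : 'I_n -> 'cV[R]_d)
    (v : 'cV[R]_d) (s r : R) :
  (forall i, `|c i| <= s) -> (forall i, norm2 (w i) <= r) ->
  `|dotv v (\sum_i c i *: w i)| <= n%:R * (s * r) * norm2 v.
Proof.
move=> c_le w_le; have -> : n%:R * (s * r) * norm2 v = \sum_(i < n) s * (r * norm2 v).
  by rewrite sumr_const card_ord -mulr_natl; ring.
rewrite dotv_sumr; apply: le_trans (ler_norm_sum _ _ _) _.
apply: ler_sum => i _; rewrite dotvZr normrM.
apply: ler_pM; rewrite ?normr_ge0 ?c_le //.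
by apply: le_trans (cauchy_schwarz _ _) _; rewrite mulrC ler_wpM2r ?norm2_ge0.
Qed.

Section LogisticRegression.
Variables (R : realType) (n d : nat) (x : 'I_n -> 'cV[R]_d) (y : 'I_n -> bool).

Definition score (b : 'cV[R]_d) : 'cV[R]_d :=
  \sum_i ((y i)%:R - sigma (dotv (x i) b)) *: x i.

Implicit Types (b v : 'cV[R]_d) (t : R).

Lemma is_derive_loglik_line b v t :
  is_derive t 1 (fun s => loglik x y (b + s *: v)) (dotv v (score (b + t *: v))).
Proof.
rewrite (_ : (fun s => _) = fun s => \sum_i
    ((fun a => (y i)%:R * a - ln (1 + expR a)) (dotv (x i) b + s * dotv (x i) v))).
  apply: is_derive_eq (is_derive_sumr (fun i =>
    is_derive_line _ _ t (fun a => is_derive_loglik_term (y i)%:R a))) _.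
  rewrite /score dotv_sumr; apply: eq_bigr => i _.
  by rewrite dotvZr dotvDr dotvZr (dotvC v).
by apply/funext => s; apply: eq_bigr => i _; rewrite dotvDr dotvZr.
Qed.

Lemma hessian_quad p v : dotv v (hessian x p *m v) =
  - \sum_i sigma (dotv (x i) p) * (1 - sigma (dotv (x i) p)) * dotv (x i) v ^+ 2.
Proof.
rewrite /hessian mulNmx -scaleN1r dotvZr mulN1r mulmx_suml dotv_sumr.
congr (- _); apply: eq_bigr => i _.
by rewrite -scalemxAl dotvZr dotv_mul_outer (dotvC v) expr2 mulrA.
Qed.

Lemma is_derive_score_line b v t :
  is_derive t 1 (fun s => dotv v (score (b + s *: v)))
    (dotv v (hessian x (b + t *: v) *m v)).
Proof.
rewrite (_ : (fun s => _) = fun s => \sum_i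
    ((fun a => ((y i)%:R - sigma a) * dotv v (x i)) (dotv (x i) b + s * dotv (x i) v))).
  apply: is_derive_eq (is_derive_sumr (fun i =>
    is_derive_line _ _ t (fun a => is_derive_score_term (y i)%:R (dotv v (x i)) a))) _.
  rewrite hessian_quad -sumrN; apply: eq_bigr => i _.
  by rewrite dotvDr dotvZr (dotvC v); ring.
apply/funext => s; rewrite /score dotv_sumr; apply: eq_bigr => i _.
by rewrite dotvZr dotvDr dotvZr.
Qed.

Lemma fisher_sym p : (fisher x p)^T = fisher x p.
Proof.
rewrite /fisher /hessian !linearN /= linearZ /= linear_sum /=; do 3 congr (_ _).
by apply: eq_bigr => i _; rewrite linearZ /= trmx_mul trmxK.
Qed.

Lemma fisher_quad p v :
  dotv v (fisher x p *m v) = - (n%:R^-1 * dotv v (hessian x p *m v)).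
Proof. by rewrite /fisher mulNmx -scalemxAl -scaleN1r !dotvZr mulN1r. Qed.

Lemma score_grad_approxE L (z : 'I_L -> R) b : score b = grad_approx x y z b +
  \sum_i (FL z (dotv (x i) b) - sigma (dotv (x i) b)) *: x i.
Proof.
rewrite /score /grad_approx -big_split; apply: eq_bigr => i _.
by rewrite /= !scalerBl addrA subrK.
Qed.

Lemma oppr_dotv_mean_score_le L (z : 'I_L -> R) b v (r s : R) :
    0 <= r -> (forall i, norm2 (x i) <= r) -> (forall a, `|FL z a - sigma a| <= s) ->
    norm2 (grad_approx x y z b) <= n%:R * r / L%:R ->
  - (n%:R^-1 * dotv v (score b)) <= norm2 v * (r * (L%:R^-1 + s)).
Proof.
move=> r_ge0 x_le dist_le grad_le.
have s_ge0 : 0 <= s := le_trans (normr_ge0 _) (dist_le 0).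
have [n0|n_gt0] := posnP n.
  have -> : (n%:R : R)^-1 = 0 by rewrite n0 invr0.
  by rewrite mul0r oppr0 !mulr_ge0 ?norm2_ge0 ?addr_ge0 ?invr_ge0.
rewrite -mulrN ler_pdivrMl ?ltr0n //.
have -> : n%:R * (norm2 v * (r * (L%:R^-1 + s))) =
    norm2 v * (n%:R * r / L%:R) + n%:R * (s * r) * norm2 v by ring.
rewrite (score_grad_approxE z) dotvDr opprD; apply: lerD.
  apply: le_trans (ler_norm _) _; rewrite normrN.
  by apply: le_trans (cauchy_schwarz _ _) _; rewrite ler_wpM2l ?norm2_ge0.
by apply: le_trans (ler_norm _) _; rewrite normrN dotv_sum_scale_le.
Qed.

Lemma score_mean_value b0 b : (forall c, loglik x y c <= loglik x y b0) ->
  exists2 xi, 0 < xi < 1 & dotv (b - b0) (score b) =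
    dotv (b - b0) (hessian x (b0 + xi *: (b - b0)) *m (b - b0)).
Proof.
move=> b0_max; set v := b - b0.
have loglik_max t : loglik x y (b0 + t *: v) <= loglik x y (b0 + 0 *: v).
  by rewrite scale0r addr0.
have [xi xi01] := mvt_deriv_from_max (is_derive_loglik_line b0 v)
  (is_derive_score_line b0 v) loglik_max.
by rewrite scale1r addrC subrK; exists xi.
Qed.

End LogisticRegression.

Theorem lemma3 (R : realType) (n d : nat)
  (x : 'I_n -> 'cV[R]_d) (y : 'I_n -> bool) (Rad : R)
  (hRad : 0 < Rad) (hx : forall i, norm2 (x i) <= Rad)
  (betahat : 'cV[R]_d) (hmax : forall b : 'cV[R]_d, loglik x y b <= loglik x y betahat)
  (L : nat) (hL : (1 <= L)%N) (z : 'I_L -> R)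
  (beta : 'cV[R]_d)
  (hgrad : norm2 (grad_approx x y z beta) <= n%:R * Rad / L%:R)
  (hlam : 0 < inf [set lambda_min (fisher x (a *: beta + (1 - a) *: betahat))
                   | a in [set a : R | 0 <= a <= 1]]) :
  norm2 (beta - betahat) <=
    Rad * ((L%:R)^-1 + sup [set `|FL z a - sigma a| | a in [set: R]])
    / inf [set lambda_min (fisher x (a *: beta + (1 - a) *: betahat))
           | a in [set a : R | 0 <= a <= 1]].
Proof.
set T := [set lambda_min _ | a in _] in hlam *; set mu := inf T.
set s := sup _; set v := beta - betahat.
have [v0|v_neq0] := eqVneq v 0.
  have s_ge0 : 0 <= s := le_trans (normr_ge0 _) (dist_FL_sigma_le_sup z 0).
  rewrite v0 /norm2 dotv0r sqrtr0.
  by rewrite !mulr_ge0 ?addr_ge0 ?invr_ge0 ?ler0n //; apply: ltW.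
have N_gt0 : 0 < norm2 v by rewrite sqrtr_gt0 lt_def dotvv_eq0 v_neq0 dotvv_ge0.
have [xi /andP[xi_gt0 xi_lt1] score_eq] := score_mean_value beta hmax.
set p := betahat + xi *: v in score_eq.
have mu_le : mu <= lambda_min (fisher x p).
  apply: inf_le_of_gt0 hlam _; exists xi; first by rewrite /= !ltW.
  by congr (lambda_min (fisher x _)); apply/matrixP => i j; rewrite !mxE; ring.
have upper := oppr_dotv_mean_score_le v (ltW hRad) hx (dist_FL_sigma_le_sup z) hgrad.
have := lambda_min_quad_le v (fisher_sym x p); rewrite fisher_quad -score_eq => lower.
rewrite ler_pdivlMr // -(ler_pM2l N_gt0); apply: le_trans (le_trans lower upper).
by rewrite mulrA -expr2 mulrC sqr_norm2 ler_wpM2r ?dotvv_ge0.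
Qed.
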